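(* Let $k\ge1$ and let $x,y$ be integer sequences of length $k$ with identical second-order cyclic statistics, i.e. $S_{i_1,i_2}(x)=S_{i_1,i_2}(y)$ for all indices $i_1,i_2$. Then for each $\alpha\in[k]$, either (1) $\hat{x}_j\neq 0$ and $\hat{y}_j\neq 0$ for all $j\in G_\alpha$, or (2) $\hat{x}_j=\hat{y}_j=0$ for all $j\in G_\alpha$.
   Context: Sequences are indexed modulo $k$. The cyclic statistic is $S_{i_1,\dots,i_m}(x)=\sum_{j=1}^{k} x_{i_1+j}\cdots x_{i_m+j}$ (indices mod $k$). The Fourier transform is $\hat{x}_j=\sum_{\ell=0}^{k-1}x_\ell e^{2\pi i j\ell/k}$ (indices mod $k$). $[k]=\{1,\dots,k\}$ and $G_\alpha=\{j\in[k]:\gcd(j,k)=\alpha\}$. *)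

From HB Require Import structures.
From mathcomp Require Import all_boot all_order all_algebra.
From mathcomp Require Import complex.
From mathcomp Require Import reals trigo.
Set Implicit Arguments. Unset Strict Implicit. Unset Printing Implicit Defensive.
Import Order.TTheory GRing.Theory Num.Theory.
Local Open Scope ring_scope.
Local Open Scope complex_scope.

Definition xat (x : seq int) (n : nat) : int := x`_(n %% size x).

Definition S2 (x : seq int) (i1 i2 : nat) : int :=
  \sum_(1 <= j < (size x).+1) xat x (i1 + j) * xat x (i2 + j).

Definition omega (R : realType) (k : nat) : R[i] :=
  (cos (2 * pi / k%:R) +i* sin (2 * pi / k%:R))%C.

Definition fourier (R : realType) (x : seq int) (j : nat) : R[i] :=
  \sum_(l < size x) ((xat x l)%:~R) * (omega R (size x)) ^+ (j * l).

Definition Galpha (k alpha : nat) : seq nat :=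
  [seq j <- iota 1 k | gcdn j k == alpha].

From HB Require Import structures.
From mathcomp Require Import all_boot all_order all_algebra all_field.
From mathcomp Require Import complex.
From mathcomp Require Import reals trigo.
From mathcomp Require Import ring.
Set Implicit Arguments. Unset Strict Implicit. Unset Printing Implicit Defensive.
Import Order.TTheory GRing.Theory Num.Theory.
Local Open Scope ring_scope.

(* The second-order statistics determine the autocorrelation of x, hence the
   products xhat_j * xhat_(-j) are the same for x and y.  On the
   other hand xhat_j is the value at omega^j of an integer polynomial, and
   omega^j is a primitive root of unity whose order only depends on gcd(j, k);
   since the cyclotomic polynomials are irreducible over Q, xhat vanishes
   either everywhere or nowhere on G_alpha.  As -j ranges over G_alpha with j,
   a zero of xhat on G_alpha forces a zero of yhat there, and conversely. *)

Local Notation pZtoQ := (map_poly (intr : int -> rat)).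

Lemma map_poly_ratr_intr (F : numFieldType) (P : {poly int}) :
  map_poly (ratr : rat -> F) (pZtoQ P) = map_poly intr P.
Proof. by rewrite -map_poly_comp; apply: eq_map_poly => a /=; rewrite ratr_int. Qed.

Lemma root_Cyclotomic (F : idomainType) n (w : F) :
  n.-primitive_root w -> root (map_poly intr 'Phi_n) w.
Proof.
move=> prim_w; have n_gt0 := prim_order_gt0 prim_w.
have mapXn1 m : map_poly intr ('X^m - 1 : {poly int}) = 'X^m - 1 :> {poly F}.
  by rewrite rmorphB rmorph1 /= map_polyXn.
have := congr1 (horner^~ w) (congr1 (map_poly intr) (prod_Cyclotomic n_gt0)).
rewrite mapXn1 rmorph_prod horner_prod !hornerE prim_expr_order // subrr.
move/eqP; rewrite prodf_seq_eq0 => /hasP[d]; rewrite -dvdn_divisors // => d_dvd_n /eqP Phi_d_w.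
have [<- | d_neq_n] := eqVneq d n; first exact/eqP.
have d_gt0 : (0 < d)%N := dvdn_gt0 n_gt0 d_dvd_n.
have : root (map_poly intr ('X^d - 1) : {poly F}) w.
  rewrite -(prod_Cyclotomic d_gt0) rmorph_prod /root horner_prod.
  by rewrite (bigD1_seq d) ?divisors_uniq -?dvdn_divisors //= Phi_d_w mul0r.
rewrite mapXn1 /root !hornerE subr_eq0 -(prim_order_dvd prim_w).
by move=> /(dvdn_leq d_gt0) n_le_d; rewrite eqn_leq n_le_d dvdn_leq in d_neq_n.
Qed.

(* Phi_n is the minimal polynomial over Q of the primitive n-th roots in algC,
   and gcd(Phi_n, P) has such a root. *)
Lemma Cyclotomic_dvdp (F : numFieldType) n (w : F) (P : {poly int}) :
  n.-primitive_root w -> root (map_poly intr P) w -> pZtoQ 'Phi_n %| pZtoQ P.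
Proof.
move=> prim_w Pw; set g := gcdp (pZtoQ 'Phi_n) (pZtoQ P).
have gw : root (map_poly (ratr : rat -> F) g) w.
  by rewrite gcdp_map root_gcd !map_poly_ratr_intr Pw root_Cyclotomic.
have Phi_neq0 : pZtoQ 'Phi_n != 0.
  by rewrite map_poly_eq0_id0 ?lead_coef_eq0 ?monic_neq0 ?Cyclotomic_monic //
    (monicP (Cyclotomic_monic n)) oner_eq0.
have g_neq0 : g != 0 by rewrite gcdp_eq0 negb_and Phi_neq0.
have : (1 < size (map_poly (ratr : rat -> F) g))%N.
  by apply: root_size_gt1 gw; rewrite map_poly_eq0.
rewrite size_map_poly => size_g_gt1.
have : size (map_poly (ratr : rat -> algC) g) != 1%N.
  by rewrite size_map_poly gtn_eqF.
case/closed_rootP => z gz.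
have prim_z : n.-primitive_root z.
  have [z0 prim_z0] := C_prim_root_exists (prim_order_gt0 prim_w).
  have : root (map_poly (ratr : rat -> algC) (pZtoQ 'Phi_n)) z.
    have /dvdpP[q ->] := dvdp_gcdl (pZtoQ 'Phi_n) (pZtoQ P).
    by rewrite rmorphM rootM gz orbT.
  by rewrite map_poly_ratr_intr (Cintr_Cyclotomic prim_z0) root_cyclotomic.
have [p [Dp _] dvdp_p] := minCpolyP z.
have p_dvd_g : p %| g by rewrite -dvdp_p.
have -> : pZtoQ 'Phi_n = p.
  apply: (map_inj_poly (fmorph_inj (ratr : {rmorphism rat -> algC})) (rmorph0 _)).
  by rewrite -Dp map_poly_ratr_intr (Cintr_Cyclotomic prim_z) (minCpoly_cyclotomic prim_z).
exact: dvdp_trans p_dvd_g (dvdp_gcdr _ _).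
Qed.

Lemma root_prim_root_eq (F : numFieldType) n (w w' : F) (P : {poly int}) :
  n.-primitive_root w -> n.-primitive_root w' ->
  root (map_poly intr P) w -> root (map_poly intr P) w'.
Proof.
move=> prim_w prim_w' Pw; have /dvdpP[q Dq] := Cyclotomic_dvdp prim_w Pw.
have := congr1 (map_poly (ratr : rat -> F)) Dq.
rewrite rmorphM /= !map_poly_ratr_intr => ->.
by rewrite rootM root_Cyclotomic ?orbT.
Qed.

Lemma big_ord_shift_mod (T : Type) (idx : T) (op : Monoid.com_law idx)
    k s (G : nat -> T) : (0 < k)%N ->
  \big[op/idx]_(l < k) G l = \big[op/idx]_(d < k) G ((d + s) %% k)%N.
Proof.
move=> k_gt0; pose shift (d : 'I_k) := Ordinal (ltn_pmod (d + s)%N k_gt0).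
have shift_inj : injective shift.
  move=> a b /(congr1 val) /= /eqP; rewrite eqn_modDr !modn_small // => /eqP ab.
  exact: val_inj.
by rewrite (reindex_inj shift_inj).
Qed.

Lemma xat_mod x n : xat x (n %% size x) = xat x n.
Proof. by rewrite /xat modn_mod. Qed.

Lemma S2_ord x d : (0 < size x)%N ->
  S2 x d 0 = \sum_(m < size x) xat x (d + m) * xat x m.
Proof.
move=> k_gt0; rewrite /S2 big_add1 /= big_mkord.
rewrite (big_ord_shift_mod _ 1 (fun m => xat x (d + m) * xat x m)) //.
apply: eq_bigr => i _; rewrite add0n addn1.
by rewrite xat_mod -[in RHS](xat_mod x (d + _)) modnDmr xat_mod.
Qed.

Definition dft (F : comNzRingType) (x : seq int) (w : F) : F :=
  \sum_(l < size x) (xat x l)%:~R * w ^+ l.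

Lemma dft_horner (F : comNzRingType) x (w : F) :
  dft x w = (map_poly intr (\poly_(l < size x) xat x l)).[w].
Proof.
have -> : map_poly intr (\poly_(l < size x) xat x l) =
          \poly_(l < size x) ((xat x l)%:~R : F).
  by apply/polyP => i; rewrite coef_map !coef_poly; case: ifP.
by rewrite horner_poly.
Qed.

(* Both sides are sums over pairs (l, m); put d = l - m (mod k), using w^(k-1) = w^-1. *)
Lemma dft_autocorrelation (F : comNzRingType) x (w : F) :
  (0 < size x)%N -> w ^+ size x = 1 ->
  dft x w * dft x (w ^+ (size x).-1) =
  \sum_(d < size x) (S2 x d 0)%:~R * w ^+ d.
Proof.
set k := size x => k_gt0 wk.
rewrite /dft -/k mulrC big_distrl /=.
have row m : (m < k)%N ->
    (xat x m)%:~R * (w ^+ k.-1) ^+ m * (\sum_(l < k) (xat x l)%:~R * w ^+ l) =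
    \sum_(d < k) (xat x (d + m) * xat x m)%:~R * w ^+ d.
  move=> m_lt_k; rewrite mulrC big_distrl /=.
  rewrite (big_ord_shift_mod _ m (fun l => (xat x l)%:~R * w ^+ l * _)) //.
  apply: eq_bigr => d _.
  rewrite (expr_mod _ wk) xat_mod intrM mulrACA; congr (_ * _).
  rewrite -exprM -exprD -addnA -{1}(mul1n m) -mulnDl add1n prednK //.
  by rewrite exprD exprM wk expr1n mulr1.
rewrite (eq_bigr _ (fun (m : 'I_k) _ => row m (ltn_ord m))) exchange_big /=.
by apply: eq_bigr => d _; rewrite -big_distrl S2_ord // -rmorph_sum.
Qed.

Section Fourier.
Variable R : realType.
Local Open Scope complex_scope.

Lemma expr_cis (t : R) n :
  (cos t +i* sin t) ^+ n = cos (n%:R * t) +i* sin (n%:R * t).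
Proof.
elim: n => [|n IHn]; first by rewrite expr0 mul0r cos0 sin0.
rewrite exprS IHn -addn1 natrD mulrDl mul1r cosD sinD.
by apply/eqP; rewrite eq_complex /=; apply/andP; split; apply/eqP; ring.
Qed.

Lemma omega_expr_order k : (0 < k)%N -> omega R k ^+ k = 1.
Proof.
move=> k_gt0; rewrite /omega expr_cis mulrC divfK ?pnatr_eq0 -?lt0n //.
by rewrite mulr_natl cos2pi sin2pi.
Qed.

Lemma fourier_dft x j : fourier R x j = dft x (omega R (size x) ^+ j).
Proof. by apply: eq_bigr => l _; rewrite exprM. Qed.

(* omega^j has order d / gcd(j, d), where d | k is the order of omega, and
   gcd(j, d) = gcd(gcd(j, k), d). *)
Lemma fourier_eq0_gcdn x j j' : (0 < size x)%N ->
  gcdn j (size x) = gcdn j' (size x) -> fourier R x j = 0 -> fourier R x j' = 0.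
Proof.
move=> k_gt0 gcd_jj'; rewrite !fourier_dft !dft_horner => /eqP xj0; apply/eqP.
have [d prim_omega d_dvd_k] := prim_order_exists k_gt0 (omega_expr_order k_gt0).
have gcdn_d i : gcdn i d = gcdn (gcdn i (size x)) d.
  by rewrite -gcdnA (gcdn_idPr d_dvd_k).
move: (exp_prim_root prim_omega j) (exp_prim_root prim_omega j').
rewrite gcdn_d gcd_jj' -gcdn_d => prim_j prim_j'.
exact: root_prim_root_eq prim_j prim_j' xj0.
Qed.

Lemma fourier_autocorrelation x j : (0 < size x)%N ->
  fourier R x j * fourier R x (j * (size x).-1) =
  \sum_(d < size x) (S2 x d 0)%:~R * (omega R (size x) ^+ j) ^+ d.
Proof.
move=> k_gt0; rewrite !fourier_dft exprM -dft_autocorrelation //.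
by rewrite -exprM mulnC exprM omega_expr_order // expr1n.
Qed.

(* xhat_j xhat_(-j) = yhat_j yhat_(-j), and -j = j(k-1) has the same gcd with k as j. *)
Lemma fourier_eq0_transfer x y j0 j : size x = size y -> (0 < size x)%N ->
  (forall d, S2 x d 0 = S2 y d 0) ->
  gcdn j0 (size x) = gcdn j (size x) -> fourier R x j0 = 0 ->
  fourier R x j = 0 /\ fourier R y j = 0.
Proof.
move=> size_xy k_gt0 S2_xy gcd_j0j xj0_eq0.
have xj_eq0 : fourier R x j = 0 by apply: fourier_eq0_gcdn xj0_eq0.
have prod_xy : fourier R x j * fourier R x (j * (size x).-1) =
               fourier R y j * fourier R y (j * (size x).-1).
  have := fourier_autocorrelation (x := y) j; rewrite -size_xy => -> //.
  by rewrite fourier_autocorrelation //; apply: eq_bigr => d _; rewrite S2_xy.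
split=> //; move: prod_xy; rewrite xj_eq0 mul0r => /esym/eqP.
rewrite mulf_eq0 => /orP[/eqP // | /eqP yjN_eq0].
apply: fourier_eq0_gcdn yjN_eq0; rewrite -size_xy // gcdnC Gauss_gcdl 1?gcdnC //.
exact: coprimenP.
Qed.
End Fourier.

Theorem lemma3p5 (R : realType) (k : nat) (x y : seq int) :
  (1 <= k)%N -> size x = k -> size y = k ->
  (forall i1 i2 : nat, S2 x i1 i2 = S2 y i1 i2) ->
  forall alpha : nat, (1 <= alpha <= k)%N ->
    (forall j, j \in Galpha k alpha ->
       fourier R x j != 0 /\ fourier R y j != 0)
    \/
    (forall j, j \in Galpha k alpha ->
       fourier R x j = 0 /\ fourier R y j = 0).
Proof.
move=> k_gt0 size_x size_y S2_xy alpha _.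
have gcdn_Galpha j : j \in Galpha k alpha -> gcdn j k = alpha.
  by rewrite mem_filter => /andP[/eqP].
have transfer a b : size a = k -> size b = k -> (forall d, S2 a d 0 = S2 b d 0) ->
    forall j0 j, j0 \in Galpha k alpha -> j \in Galpha k alpha ->
    fourier R a j0 = 0 -> fourier R a j = 0 /\ fourier R b j = 0.
  move=> size_a size_b S2_ab j0 j j0G jG.
  apply: fourier_eq0_transfer; rewrite ?size_a ?size_b ?gcdn_Galpha //.
have [/hasP[j0 j0G /orP[/eqP xj0_eq0 | /eqP yj0_eq0]] | /hasPn nz] :=
  boolP (has (fun j => (fourier R x j == 0) || (fourier R y j == 0)) (Galpha k alpha)).
- by right=> j jG; apply: (transfer x y) xj0_eq0.
- right=> j jG.
  have S2_yx d : S2 y d 0 = S2 x d 0 by rewrite S2_xy.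
  by have [-> ->] := transfer y x size_y size_x S2_yx j0 j j0G jG yj0_eq0.
- by left=> j /nz; rewrite negb_or => /andP[].
Qed.
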